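(* Let $a>0$, $\phi\in\mathcal D_+[0,\infty)$, and let $C^\phi$ and the times $\sigma_k,\tau_k$ be as in the context. For every $k\ge1$ and every $t\in[\sigma_{k-1},\tau_k)$, $$C^\phi(t)=\sup_{s\in[\sigma_{k-1},t]}(\phi(s)-a)^+.$$
   Context: $\mathcal D_+[0,\infty)$ is the set of nonnegative right-continuous functions $[0,\infty)\to\mathbb R$ with left limits. $x^+=\max(x,0)$, $\wedge=\min$. For $a>0$, $C^\phi(t)=\sup_{s\in[0,t]}\big[(\phi(s)-a)^+\wedge\inf_{u\in[s,t]}\phi(u)\big]$. Times: $\tau_0=0$, $\sigma_0=\min\{t\ge0:\phi(t)-a\ge0\}$, and for $k\ge1$, $\tau_k=\min\{t\ge\sigma_{k-1}:\phi(t)\le\sup_{s\in[\sigma_{k-1},t]}\phi(s)-a\}$, $\sigma_k=\min\{t\ge\tau_k:\phi(t)-a\ge\inf_{u\in[\tau_k,t]}\phi(u)\}$, with $\min\emptyset=+\infty$ (minima are attained when finite, by right-continuity). *)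

From Stdlib Require Import Reals Lra ClassicalEpsilon.
Open Scope R_scope.

(* phi in D_+[0,oo): nonnegative, right-continuous with left limits on [0,oo).
   phi is given as a total function R -> R; only its values on [0,oo) matter. *)
Definition cadlag_nonneg (phi : R -> R) : Prop :=
  (forall t, 0 <= t -> 0 <= phi t) /\
  (forall t, 0 <= t -> forall eps, 0 < eps ->
     exists d, 0 < d /\ forall s, t <= s < t + d -> Rabs (phi s - phi t) < eps) /\
  (forall t, 0 < t -> exists l, forall eps, 0 < eps ->
     exists d, 0 < d /\ forall s, t - d < s < t -> Rabs (phi s - l) < eps).

Definition is_glb (E : R -> Prop) (m : R) : Prop :=
  (forall x, E x -> m <= x) /\ (forall b, (forall x, E x -> b <= x) -> b <= m).

Definition Rsup (E : R -> Prop) : R := epsilon (inhabits 0) (fun x => is_lub E x).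
Definition Rinf (E : R -> Prop) : R := epsilon (inhabits 0) (fun x => is_glb E x).

Definition sup_on (l t : R) (f : R -> R) : R :=
  Rsup (fun y => exists s, l <= s <= t /\ y = f s).
Definition inf_on (l t : R) (f : R -> R) : R :=
  Rinf (fun y => exists s, l <= s <= t /\ y = f s).

Definition posp (x : R) : R := Rmax x 0.

Definition Cphi (a : R) (phi : R -> R) (t : R) : R :=
  sup_on 0 t (fun s => Rmin (posp (phi s - a)) (inf_on s t phi)).

(* Extended times in [0,+oo]: None stands for +oo.
   first_time l P = min {t >= l | P t}  (min of empty set = +oo); the minimum is
   attained by right-continuity, so it coincides with the infimum used here. *)
Definition first_time (l : R) (P : R -> Prop) : option R :=
  match excluded_middle_informative (exists t, l <= t /\ P t) with
  | left _ => Some (Rinf (fun t => l <= t /\ P t))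
  | right _ => None
  end.

Definition sigma0 (a : R) (phi : R -> R) : option R :=
  first_time 0 (fun t => phi t - a >= 0).

Definition tau_next (a : R) (phi : R -> R) (sig : option R) : option R :=
  match sig with
  | None => None
  | Some s => first_time s (fun t => phi t <= sup_on s t phi - a)
  end.

Definition sigma_next (a : R) (phi : R -> R) (tau : option R) : option R :=
  match tau with
  | None => None
  | Some s => first_time s (fun t => phi t - a >= inf_on s t phi)
  end.

Fixpoint sigma_k (a : R) (phi : R -> R) (k : nat) : option R :=
  match k with
  | O => sigma0 a phi
  | S k' => sigma_next a phi (tau_next a phi (sigma_k a phi k'))
  end.

Definition tau_k (a : R) (phi : R -> R) (k : nat) : option R :=
  match k with
  | O => Some 0
  | S k' => tau_next a phi (sigma_k a phi k')
  end.

Definition lt_ext (t : R) (tau : option R) : Prop :=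
  match tau with None => True | Some x => t < x end.

From Stdlib Require Import Reals Lra Lia Classical ClassicalEpsilon.
Open Scope R_scope.

(* Write h s = (phi s - a)^+ and g s = min(h s, inf_{[s,t]} phi).
   - Lower bound: before tau_k every u in [s0,t] satisfies
     phi u > sup_{[s0,u]} phi - a >= phi s - a for s in [s0,u]; hence
     h s <= inf_{[s,t]} phi, i.e. g s = h s on [s0,t].
   - Upper bound: for s < s0 = sigma_{k-1} one has g s <= h s0.  For k = 1
     this holds because phi < a before sigma_0.  For k >= 2, sigma_{k-1} is
     the first time after tau_{k-1} at which phi - a reaches the running
     infimum of phi; this time is attained by right-continuity, and the
     inequality follows by comparing running infima. *)

Definition bounded_above_on (l t : R) (f : R -> R) : Prop :=
  exists M, forall s, l <= s <= t -> f s <= M.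

Definition bounded_below_on (l t : R) (f : R -> R) : Prop :=
  exists m, forall s, l <= s <= t -> m <= f s.

Lemma Rsup_spec (E : R -> Prop) : (exists x, E x) -> bound E -> is_lub E (Rsup E).
Proof.
  intros Hne Hb. unfold Rsup. apply epsilon_spec.
  destruct (completeness E Hb Hne) as [x Hx]. now exists x.
Qed.

Lemma Rinf_spec (E : R -> Prop) :
  (exists x, E x) -> (exists b, forall x, E x -> b <= x) -> is_glb E (Rinf E).
Proof.
  intros [x0 Hx0] [b Hb]. unfold Rinf. apply epsilon_spec.
  set (F := fun y => E (- y)).
  assert (HF : forall x, E x -> F (- x)).
  { intros x Ex. unfold F. now rewrite Ropp_involutive. }
  assert (Hbound : bound F).
  { exists (- b). intros y Fy. specialize (Hb _ Fy). lra. }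
  destruct (completeness F Hbound (ex_intro _ _ (HF _ Hx0))) as [m [Hub Hleast]].
  exists (- m). split.
  - intros x Ex. specialize (Hub _ (HF _ Ex)). lra.
  - intros c Hc. enough (m <= - c) by lra.
    apply Hleast. intros y Fy. specialize (Hc _ Fy). lra.
Qed.

Lemma sup_on_spec (l t : R) (f : R -> R) : l <= t -> bounded_above_on l t f ->
  is_lub (fun y => exists s, l <= s <= t /\ y = f s) (sup_on l t f).
Proof.
  intros Hlt [M HM]. apply Rsup_spec.
  - exists (f l), l. split; [lra | reflexivity].
  - exists M. intros y [s [Hs ->]]. auto.
Qed.

Lemma sup_on_ub (l t : R) (f : R -> R) (s : R) :
  bounded_above_on l t f -> l <= s <= t -> f s <= sup_on l t f.
Proof.
  intros Hb Hs. apply (proj1 (sup_on_spec l t f ltac:(lra) Hb)). now exists s.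
Qed.

Lemma sup_on_least (l t : R) (f : R -> R) (b : R) :
  l <= t -> bounded_above_on l t f ->
  (forall s, l <= s <= t -> f s <= b) -> sup_on l t f <= b.
Proof.
  intros Hlt Hb Hfb. apply (proj2 (sup_on_spec l t f Hlt Hb)).
  intros y [s [Hs ->]]. auto.
Qed.

Lemma inf_on_spec (l t : R) (f : R -> R) : l <= t -> bounded_below_on l t f ->
  is_glb (fun y => exists s, l <= s <= t /\ y = f s) (inf_on l t f).
Proof.
  intros Hlt [m Hm]. apply Rinf_spec.
  - exists (f l), l. split; [lra | reflexivity].
  - exists m. intros y [s [Hs ->]]. auto.
Qed.

Lemma inf_on_lb (l t : R) (f : R -> R) (s : R) :
  bounded_below_on l t f -> l <= s <= t -> inf_on l t f <= f s.
Proof.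
  intros Hb Hs. apply (proj1 (inf_on_spec l t f ltac:(lra) Hb)). now exists s.
Qed.

Lemma inf_on_glb (l t : R) (f : R -> R) (b : R) :
  l <= t -> bounded_below_on l t f ->
  (forall s, l <= s <= t -> b <= f s) -> b <= inf_on l t f.
Proof.
  intros Hlt Hb Hfb. apply (proj2 (inf_on_spec l t f Hlt Hb)).
  intros y [s [Hs ->]]. auto.
Qed.

Lemma inf_on_shrink (l l' t' t : R) (f : R -> R) :
  l <= l' -> l' <= t' -> t' <= t -> bounded_below_on l t f ->
  inf_on l t f <= inf_on l' t' f.
Proof.
  intros H1 H2 H3 [m Hm]. apply inf_on_glb; auto.
  - exists m. intros s Hs. apply Hm. lra.
  - intros s Hs. apply inf_on_lb; [exists m; exact Hm | lra].
Qed.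

Lemma inf_on_split (l c r : R) (f : R -> R) :
  l <= c -> c <= r -> bounded_below_on l r f ->
  Rmin (inf_on l c f) (inf_on c r f) <= inf_on l r f.
Proof.
  intros H1 H2 [m Hm].
  assert (Hsub : forall x y, l <= x -> y <= r -> bounded_below_on x y f).
  { intros x y Hx Hy. exists m. intros s Hs. apply Hm. lra. }
  apply inf_on_glb; [lra | exists m; exact Hm |].
  intros s Hs. destruct (Rle_dec s c).
  - apply Rle_trans with (inf_on l c f); [apply Rmin_l |].
    apply inf_on_lb; [apply Hsub |]; lra.
  - apply Rle_trans with (inf_on c r f); [apply Rmin_r |].
    apply inf_on_lb; [apply Hsub |]; lra.
Qed.

Lemma bounded_below_nonneg (l t : R) (f : R -> R) :
  0 <= l -> (forall v, 0 <= v -> 0 <= f v) -> bounded_below_on l t f.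
Proof. intros Hl Hf. exists 0. intros s Hs. apply Hf. lra. Qed.

Lemma bounded_above_dominated (l t l' t' : R) (f g : R -> R) :
  l <= l' -> t' <= t -> bounded_above_on l t g ->
  (forall s, l' <= s <= t' -> f s <= g s) -> bounded_above_on l' t' f.
Proof.
  intros H1 H2 [M HM] Hfg. exists M. intros s Hs.
  apply Rle_trans with (g s); [apply Hfg | apply HM]; lra.
Qed.

Lemma first_time_some (l : R) (P : R -> Prop) (x : R) : first_time l P = Some x ->
  l <= x /\ (forall u, l <= u -> P u -> x <= u) /\
  (forall e, x < e -> exists u, l <= u /\ P u /\ u < e).
Proof.
  unfold first_time. destruct excluded_middle_informative as [[u Hu] |];
    [| discriminate].
  intros Hx; injection Hx as <-.
  destruct (Rinf_spec (fun t => l <= t /\ P t)) as [Hlb Hglb].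
  { now exists u. }
  { exists l. now intros ? [? _]. }
  split; [| split].
  - apply Hglb. now intros ? [? _].
  - intros v Hv Pv. now apply Hlb.
  - intros e He. apply NNPP. intros Hnone.
    enough (e <= Rinf (fun t => l <= t /\ P t)) by lra.
    apply Hglb. intros v [Hv Pv]. apply Rnot_lt_le. intros Hve.
    apply Hnone. now exists v.
Qed.

Lemma first_time_none (l : R) (P : R -> Prop) :
  first_time l P = None -> forall u, l <= u -> ~ P u.
Proof.
  unfold first_time. destruct excluded_middle_informative as [| Hn];
    [discriminate |].
  intros _ u Hu Pu. apply Hn. eauto.
Qed.

Lemma sigma_k_nonneg (a : R) (phi : R -> R) (j : nat) (s : R) :
  sigma_k a phi j = Some s -> 0 <= s.
Proof.
  revert s. induction j as [| j IH]; intros s Hs.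
  - apply first_time_some in Hs. lra.
  - cbn [sigma_k] in Hs. unfold sigma_next, tau_next in Hs.
    destruct (sigma_k a phi j) as [s' |]; [| discriminate].
    destruct (first_time s' _) as [tau |] eqn:Htau; [| discriminate].
    apply first_time_some in Hs. apply first_time_some in Htau.
    specialize (IH s' eq_refl). lra.
Qed.

Section CadlagBounded.

Variable f : R -> R.

Hypothesis right_cont : forall t, 0 <= t -> forall eps, 0 < eps ->
  exists d, 0 < d /\ forall s, t <= s < t + d -> Rabs (f s - f t) < eps.

Hypothesis left_lim : forall t, 0 < t -> exists L, forall eps, 0 < eps ->
  exists d, 0 < d /\ forall s, t - d < s < t -> Rabs (f s - L) < eps.

Definition bounded_prefix (l t x : R) : Prop :=
  l <= x <= t /\ bounded_above_on l x f.

(* If c is the supremum of the bounded prefixes, then f is bounded on [l,c):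
   near c from the left f is close to its left limit, and further left
   it is bounded by some prefix. *)
Lemma bounded_before_sup_prefix (l t c : R) :
  0 <= l -> l <= c -> is_lub (bounded_prefix l t) c ->
  exists M, forall s, l <= s < c -> f s <= M.
Proof.
  intros Hl Hlc [_ Hleast].
  destruct (Req_dec c l) as [-> | Hne]; [exists 0; intros; lra |].
  destruct (left_lim c ltac:(lra)) as [L HL].
  destruct (HL 1 ltac:(lra)) as [d [Hd Hnear]].
  set (y := Rmax l (c - d)).
  assert (Hprefix : exists x, bounded_prefix l t x /\ y < x).
  { apply NNPP. intros Hnone.
    enough (c <= y) by (unfold y, Rmax in *; destruct Rle_dec; lra).
    apply Hleast. intros x Hx. apply Rnot_lt_le. intros Hyx.
    apply Hnone. now exists x. }
  destruct Hprefix as [x [[_ [M HM]] Hyx]].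
  exists (Rmax M (L + 1)). intros s Hs. destruct (Rle_dec s x).
  - apply Rle_trans with M; [apply HM; lra | apply Rmax_l].
  - assert (c - d < s) by (unfold y, Rmax in Hyx; destruct Rle_dec; lra).
    specialize (Hnear s ltac:(lra)). apply Rabs_def2 in Hnear.
    apply Rle_trans with (L + 1); [lra | apply Rmax_r].
Qed.

(* Supremum argument: the supremum c of the bounded prefixes is a bounded
   prefix extendable to the right by right-continuity, so c = t. *)
Lemma cadlag_bounded_above (l t : R) :
  0 <= l -> l <= t -> bounded_above_on l t f.
Proof.
  intros Hl Hlt.
  assert (Hl_prefix : bounded_prefix l t l).
  { split; [lra |]. exists (f l). intros s Hs. replace s with l by lra. lra. }
  assert (Hbound : bound (bounded_prefix l t)).
  { exists t. intros x [Hx _]. lra. }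
  destruct (completeness _ Hbound (ex_intro _ l Hl_prefix)) as [c Hc].
  pose proof Hc as [Hub Hleast].
  assert (Hlc : l <= c) by now apply Hub.
  assert (Hct : c <= t) by (apply Hleast; intros x [Hx _]; lra).
  destruct (bounded_before_sup_prefix l t c Hl Hlc Hc) as [M1 HM1].
  destruct (right_cont c ltac:(lra) 1 ltac:(lra)) as [d [Hd Hnear]].
  set (x := Rmin t (c + d / 2)).
  assert (Hx_prefix : bounded_prefix l t x).
  { split; [unfold x, Rmin; destruct Rle_dec; lra |].
    exists (Rmax M1 (f c + 1)). intros s Hs. destruct (Rlt_dec s c).
    - apply Rle_trans with M1; [apply HM1; lra | apply Rmax_l].
    - assert (s < c + d) by (unfold x, Rmin in Hs; destruct Rle_dec; lra).
      specialize (Hnear s ltac:(lra)). apply Rabs_def2 in Hnear.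
      apply Rle_trans with (f c + 1); [lra | apply Rmax_r]. }
  assert (Hxt : x = t).
  { specialize (Hub x Hx_prefix). unfold x, Rmin in *; destruct Rle_dec; lra. }
  rewrite Hxt in Hx_prefix. now destruct Hx_prefix.
Qed.

End CadlagBounded.

Lemma excess_bounded_above (a : R) (phi : R -> R) (l t : R) :
  cadlag_nonneg phi -> 0 <= l -> l <= t ->
  bounded_above_on l t (fun s => posp (phi s - a)).
Proof.
  intros [_ [Hrc Hll]] Hl Hlt.
  destruct (cadlag_bounded_above phi Hrc Hll l t Hl Hlt) as [M HM].
  exists (posp (M - a)). intros s Hs. apply Rle_max_compat_r.
  specialize (HM s Hs). lra.
Qed.

Lemma before_tau (a : R) (phi : R -> R) (j : nat) (s0 t u : R) :
  sigma_k a phi j = Some s0 -> lt_ext t (tau_k a phi (S j)) -> s0 <= u <= t ->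
  sup_on s0 u phi - a < phi u.
Proof.
  intros Hs0 Htau Hu. cbn [tau_k] in Htau. unfold tau_next in Htau.
  rewrite Hs0 in Htau.
  apply Rnot_le_lt. intros Hdrop.
  destruct (first_time s0 _) as [x |] eqn:Hx.
  - destruct (first_time_some _ _ _ Hx) as [_ [Hmin _]].
    specialize (Hmin u ltac:(lra) Hdrop). simpl in Htau. lra.
  - exact (first_time_none _ _ Hx u ltac:(lra) Hdrop).
Qed.

Lemma posp_le_future_inf (a : R) (phi : R -> R) (s0 t s : R) :
  0 <= s0 -> (forall v, 0 <= v -> 0 <= phi v) -> bounded_above_on s0 t phi ->
  (forall u, s0 <= u <= t -> sup_on s0 u phi - a < phi u) ->
  s0 <= s <= t -> posp (phi s - a) <= inf_on s t phi.
Proof.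
  intros Hs0 Hnn Hbdd Hnodrop Hs.
  apply inf_on_glb; [lra | apply bounded_below_nonneg; auto; lra |].
  intros u Hu. apply Rmax_lub; [| apply Hnn; lra].
  assert (phi s <= sup_on s0 u phi).
  { apply sup_on_ub; [| lra].
    apply (bounded_above_dominated s0 t s0 u phi phi); [lra | lra | exact Hbdd |].
    intros; lra. }
  specialize (Hnodrop u ltac:(lra)). lra.
Qed.

(* sigma_next is attained: by right-continuity, phi - a reaches the running
   infimum since tau at the hitting time itself. *)
Lemma sigma_next_attained (a : R) (phi : R -> R) (tau s0 : R) :
  0 < a -> cadlag_nonneg phi -> 0 <= tau ->
  first_time tau (fun u => phi u - a >= inf_on tau u phi) = Some s0 ->
  phi s0 - a >= inf_on tau s0 phi.
Proof.
  intros Ha [Hnn [Hrc _]] Htau Hs0.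
  destruct (first_time_some _ _ _ Hs0) as [Hts0 [Hmin Happrox]].
  set (m := inf_on tau s0 phi).
  apply Rnot_lt_ge. intros Hlt.
  set (eps := Rmin (m - (phi s0 - a)) a / 2).
  assert (Heps : 0 < eps /\ eps < m - (phi s0 - a) /\ 2 * eps <= a)
    by (unfold eps, Rmin; destruct Rle_dec; lra).
  destruct (Hrc s0 ltac:(lra) eps ltac:(lra)) as [d [Hd Hnear]].
  destruct (Happrox (s0 + d) ltac:(lra)) as [u [Hu [Hhit Hud]]].
  assert (Hs0u : s0 <= u) by auto.
  assert (Hinf_u : Rmin m (phi s0 - eps) <= inf_on tau u phi).
  { apply inf_on_glb; [lra | apply bounded_below_nonneg; auto |].
    intros v Hv. destruct (Rle_dec v s0).
    - apply Rle_trans with m; [apply Rmin_l |].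
      apply inf_on_lb; [apply bounded_below_nonneg; auto | lra].
    - specialize (Hnear v ltac:(lra)). apply Rabs_def2 in Hnear.
      apply Rle_trans with (phi s0 - eps); [apply Rmin_r | lra]. }
  specialize (Hnear u ltac:(lra)). apply Rabs_def2 in Hnear.
  unfold Rmin in Hinf_u. destruct Rle_dec in Hinf_u; lra.
Qed.

(* Upper bound for k = 1: before sigma_0, phi < a. *)
Lemma C_term_before_sigma0 (a : R) (phi : R -> R) (s0 t s : R) :
  sigma0 a phi = Some s0 -> 0 <= s < s0 ->
  Rmin (posp (phi s - a)) (inf_on s t phi) <= posp (phi s0 - a).
Proof.
  intros Hs0 Hs. destruct (first_time_some _ _ _ Hs0) as [_ [Hmin _]].
  assert (Hbelow : phi s < a).
  { apply Rnot_le_lt. intros Hle. specialize (Hmin s ltac:(lra) ltac:(lra)). lra. }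
  apply Rle_trans with (posp (phi s - a)); [apply Rmin_l |].
  unfold posp. rewrite Rmax_right by lra. apply Rmax_r.
Qed.

Lemma C_term_before_sigma_next (a : R) (phi : R -> R) (tau s0 t s : R) :
  0 < a -> cadlag_nonneg phi -> 0 <= tau -> s0 <= t -> 0 <= s < s0 ->
  first_time tau (fun u => phi u - a >= inf_on tau u phi) = Some s0 ->
  Rmin (posp (phi s - a)) (inf_on s t phi) <= posp (phi s0 - a).
Proof.
  intros Ha Hphi Htau Hs0t Hs Hs0.
  pose proof (sigma_next_attained a phi tau s0 Ha Hphi Htau Hs0) as Hreach.
  destruct Hphi as [Hnn _].
  assert (Hbb : forall l r, 0 <= l -> bounded_below_on l r phi)
    by (intros; now apply bounded_below_nonneg).
  destruct (first_time_some _ _ _ Hs0) as [Htau_s0 [Hmin _]].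
  set (m := inf_on tau s0 phi) in *.
  assert (Hm_h : m <= posp (phi s0 - a)) by (unfold posp; apply Rmax_Rle; lra).
  destruct (Rlt_dec s tau) as [Hstau | Hstau].
  - (* [tau,s0] lies inside [s,t] *)
    apply Rle_trans with (inf_on s t phi); [apply Rmin_r |].
    apply Rle_trans with m; [apply inf_on_shrink; [lra | lra | lra | apply Hbb; lra] | exact Hm_h].
  - assert (Hnot_hit : phi s - a < inf_on tau s phi).
    { apply Rnot_le_lt. intros Hle.
      specialize (Hmin s ltac:(lra) (Rle_ge _ _ Hle)). lra. }
    set (I := inf_on s t phi).
    destruct (Rle_dec I (phi s0 - a)) as [HI | HI].
    + apply Rle_trans with I; [apply Rmin_r |].
      apply Rle_trans with (phi s0 - a); [exact HI | apply Rmax_l].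
    + (* phi > phi s0 - a >= m on [s,s0], so m is the infimum over [tau,s] *)
      assert (Hinf_s0 : I <= inf_on s s0 phi) by (apply inf_on_shrink; [lra | lra | lra | apply Hbb; lra]).
      pose proof (inf_on_split tau s s0 phi ltac:(lra) ltac:(lra) (Hbb _ _ Htau))
        as Hsplit.
      fold m in Hsplit.
      assert (Hinf_s : inf_on tau s phi <= m)
        by (unfold Rmin in Hsplit; destruct Rle_dec in Hsplit; lra).
      apply Rle_trans with (posp (phi s - a)); [apply Rmin_l |].
      apply Rle_max_compat_r. lra.
Qed.

Lemma C_term_before_sigma (a : R) (phi : R -> R) (j : nat) (s0 t s : R) :
  0 < a -> cadlag_nonneg phi -> sigma_k a phi j = Some s0 -> s0 <= t ->
  0 <= s < s0 ->
  Rmin (posp (phi s - a)) (inf_on s t phi) <= posp (phi s0 - a).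
Proof.
  intros Ha Hphi Hs0 Hs0t Hs. destruct j as [| j].
  - exact (C_term_before_sigma0 a phi s0 t s Hs0 Hs).
  - cbn [sigma_k] in Hs0. unfold sigma_next in Hs0.
    destruct (tau_next a phi (sigma_k a phi j)) as [tau |] eqn:Htau;
      [| discriminate].
    assert (Htau0 : 0 <= tau).
    { unfold tau_next in Htau.
      destruct (sigma_k a phi j) as [s' |] eqn:Hs'; [| discriminate].
      apply sigma_k_nonneg in Hs'. apply first_time_some in Htau. lra. }
    exact (C_term_before_sigma_next a phi tau s0 t s Ha Hphi Htau0 Hs0t Hs Hs0).
Qed.

Theorem proposition3p2 (a : R) (phi : R -> R) (k : nat) (t s0 : R) :
  0 < a -> cadlag_nonneg phi -> (1 <= k)%nat ->
  sigma_k a phi (k - 1) = Some s0 -> s0 <= t -> lt_ext t (tau_k a phi k) ->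
  Cphi a phi t = sup_on s0 t (fun s => posp (phi s - a)).
Proof.
  intros Ha Hphi Hk Hs0 Hs0t Htau.
  destruct k as [| j]; [lia |]. replace (S j - 1)%nat with j in Hs0 by lia.
  pose proof (sigma_k_nonneg _ _ _ _ Hs0) as Hs0_nn.
  pose proof Hphi as [Hnn [Hrc Hll]].
  set (h := fun s => posp (phi s - a)).
  set (g := fun s => Rmin (h s) (inf_on s t phi)).
  assert (Hh_bdd : bounded_above_on s0 t h)
    by (apply excess_bounded_above; auto; lra).
  assert (Hg_bdd : bounded_above_on 0 t g).
  { apply (bounded_above_dominated 0 t 0 t g h); [lra | lra | | intros; apply Rmin_l].
    apply excess_bounded_above; auto; lra. }
  unfold Cphi. fold h g. apply Rle_antisym.
  - apply sup_on_least; [lra | exact Hg_bdd |]. intros s Hs.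
    destruct (Rlt_le_dec s s0).
    + apply Rle_trans with (h s0).
      * apply (C_term_before_sigma a phi j s0 t s); auto; lra.
      * apply sup_on_ub; [exact Hh_bdd | lra].
    + apply Rle_trans with (h s); [apply Rmin_l |].
      apply sup_on_ub; [exact Hh_bdd | lra].
  - apply sup_on_least; [lra | exact Hh_bdd |]. intros s Hs.
    apply Rle_trans with (g s).
    + apply Rmin_glb; [apply Rle_refl |].
      apply (posp_le_future_inf a phi s0 t s); auto.
      * apply cadlag_bounded_above; auto; lra.
      * intros u Hu. exact (before_tau a phi j s0 t u Hs0 Htau Hu).
    + apply sup_on_ub; [exact Hg_bdd | lra].
Qed.
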